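(* An integral domain $D$ is a PvMD if and only if $D$ is essential and $\mathcal{E}(D)$ is closed in $\operatorname{Spec}(D)$ with respect to the constructible topology.
   Context: All rings are commutative with identity. For an integral domain $D$ with quotient field $K$ and nonzero fractional ideal $I$: $(D:I)=\{x\in K:xI\subseteq D\}$, $I^v=(D:(D:I))$, $I^t=\bigcup\{J^v:J\subseteq I \text{ finitely generated}\}$; $t$-ideals are $(0)$ and ideals with $I=I^t$; $t$-maximal ideals are $t$-ideals maximal among proper $t$-ideals. $D$ is a PvMD if $D_{\mathfrak m}$ is a valuation domain for all $t$-maximal $\mathfrak m$. A valuation overring is essential if it equals $D_{\mathfrak p}$ for a prime $\mathfrak p$; $D$ is essential if it is the intersection of a family of essential valuation overrings. $\mathcal{E}(D)=\{\mathfrak p\in\operatorname{Spec}(D): D_{\mathfrak p}\text{ is a valuation domain}\}$. The constructible topology on $\operatorname{Spec}(D)$ is the coarsest topology making every $D(f)=\{\mathfrak p:f\notin\mathfrak p\}$ clopen. *)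

From HB Require Import structures.
From mathcomp Require Import all_boot all_order all_algebra.
Set Implicit Arguments. Unset Strict Implicit. Unset Printing Implicit Defensive.
Import GRing.Theory.
Local Open Scope ring_scope.

Section Defs.
Variable D : idomainType.

Definition QF := {fraction D}.
Definition emb (d : D) : QF := @FracField.tofrac D d.

Definition inD (x : QF) : Prop := exists d : D, x = emb d.

Definition is_ideal (I : D -> Prop) : Prop :=
  I 0 /\ (forall x y, I x -> I y -> I (x - y)) /\ (forall a x, I x -> I (a * x)).

Definition is_prime (p : D -> Prop) : Prop :=
  is_ideal p /\ ~ p 1 /\ (forall x y, p (x * y) -> p x \/ p y).

Definition embI (I : D -> Prop) (x : QF) : Prop := exists d, I d /\ x = emb d.

Definition colon (A : QF -> Prop) (x : QF) : Prop := forall a, A a -> inD (x * a).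

Definition vclos (A : QF -> Prop) : QF -> Prop := colon (colon A).

Definition span (s : seq QF) (x : QF) : Prop :=
  exists c : 'I_(size s) -> D, x = \sum_(i < size s) emb (c i) * s`_i.

Definition tclos (I : QF -> Prop) (x : QF) : Prop :=
  exists s : seq QF, (forall y, y \in s -> I y) /\ vclos (span s) x.

Definition is_t_ideal (I : D -> Prop) : Prop :=
  is_ideal I /\
  ((forall x, I x -> x = 0) \/ (forall x : QF, tclos (embI I) x <-> embI I x)).

Definition is_t_maximal (m : D -> Prop) : Prop :=
  is_t_ideal m /\ ~ m 1 /\
  (forall J : D -> Prop, is_t_ideal J -> ~ J 1 -> (forall x, m x -> J x) ->
     forall x, J x -> m x).

Definition loc (p : D -> Prop) (x : QF) : Prop :=
  exists a b : D, ~ p b /\ x = emb a / emb b.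

(* an overring V (D subset V subset K, quotient field K) is a valuation domain *)
Definition is_valuation (V : QF -> Prop) : Prop :=
  forall x : QF, x != 0 -> V x \/ V x^-1.

Definition is_subring (V : QF -> Prop) : Prop :=
  V 1 /\ (forall x y, V x -> V y -> V (x - y)) /\ (forall x y, V x -> V y -> V (x * y)).

Definition is_overring (V : QF -> Prop) : Prop :=
  is_subring V /\ (forall d, V (emb d)).

Definition PvMD : Prop :=
  forall m, is_t_maximal m -> is_valuation (loc m).

Definition is_essential_valuation_overring (V : QF -> Prop) : Prop :=
  is_overring V /\ is_valuation V /\
  exists p, is_prime p /\ (forall x, V x <-> loc p x).

Definition essential : Prop :=
  exists F : (QF -> Prop) -> Prop,
    (forall V, F V -> is_essential_valuation_overring V) /\
    (forall x : QF, inD x <-> (forall V, F V -> V x)).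

Definition Spec : Type := {p : D -> Prop | is_prime p}.

Definition EE (P : Spec) : Prop := is_valuation (loc (proj1_sig P)).

Definition Dopen (f : D) (P : Spec) : Prop := ~ proj1_sig P f.

End Defs.

Inductive gen_open (X : Type) (S : (X -> Prop) -> Prop) : (X -> Prop) -> Prop :=
  | go_sub U : S U -> gen_open S U
  | go_full : gen_open S (fun _ => True)
  | go_inter U V : gen_open S U -> gen_open S V -> gen_open S (fun x => U x /\ V x)
  | go_union (F : (X -> Prop) -> Prop) :
      (forall U, F U -> gen_open S U) -> gen_open S (fun x => exists U, F U /\ U x)
  | go_ext U V : (forall x, U x <-> V x) -> gen_open S U -> gen_open S V.

(* constructible topology on Spec(D): coarsest topology in which every D(f) is
   clopen, i.e. generated by the sets D(f) and their complements *)
Definition constructible_subbasis (D : idomainType) (U : Spec D -> Prop) : Prop :=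
  exists f : D, (forall P, U P <-> Dopen f P) \/ (forall P, U P <-> ~ Dopen f P).

Definition constructible_open (D : idomainType) : (Spec D -> Prop) -> Prop :=
  gen_open (@constructible_subbasis D).

Definition constructible_closed (D : idomainType) (C : Spec D -> Prop) : Prop :=
  constructible_open (fun P => ~ C P).

(* If D is a PvMD, D is the intersection of its localizations at t-maximal ideals.
   A prime P with D_P not a valuation domain is then not a t-ideal, so some finitely
   generated J <= P has an element f of J^v outside P; the constructible open set
   {Q | J <= Q, f \notin Q} contains P and misses E(D), because a prime Q with D_Q a
   valuation domain contains the v-closure of every finitely generated ideal inside it.
   Conversely, let m be t-maximal with D_m not a valuation domain, and choose such a
   neighbourhood {Q | J <= Q, f \notin Q} of m missing E(D). For each Q in E(D)
   containing J, some power f^n is divisible in D_Q by a generator of J D_Q: otherwise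
   the contraction of \bigcap_n f^n Q D_Q would be a prime in the neighbourhood whose
   localization is a valuation domain. As E(D) is closed, an ultrafilter limit of
   counterexamples makes n uniform, and since D is an intersection of essential
   valuation overrings D_p this yields f^n \in J^v <= m, hence f \in m. *)

From Pilot Require Import Defs.
From HB Require Import structures.
From mathcomp Require Import all_boot all_order all_algebra generic_quotient.
From mathcomp Require Import ring.
From mathcomp Require Import boolp classical_sets filter.
Set Implicit Arguments. Unset Strict Implicit. Unset Printing Implicit Defensive.
Import GRing.Theory.
Local Open Scope ring_scope.
Local Open Scope quotient_scope.

Lemma divf_cross_cancel (F : fieldType) (x y u v : F) :
  x != 0 -> y != 0 -> u != 0 -> v != 0 -> x * y / (u * v) * (u / x) * (v / y) = 1.
Proof. by move=> nx ny nu nv; field; rewrite nx ny nu nv. Qed.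

Lemma chain_bigcup_seq (T : eqType) (F : set (set T)) X0 : F X0 -> total_on F subset ->
  forall s : seq T, (forall g, g \in s -> (\bigcup_(X in F) X)%classic g) ->
  exists2 X, F X & (X0 `<=` X)%classic /\ forall g, g \in s -> X g.
Proof.
move=> FX0 Ftot; elim=> [|g s IH] hs; first by exists X0 => //; split.
have [|X2 FX2 [sX02 sX2]] := IH; first by move=> y ys; apply: hs; rewrite inE ys orbT.
have [X1 FX1 X1g] := hs g (mem_head _ _).
have [X12|X21] := Ftot _ _ FX1 FX2.
  by exists X2 => //; split => // y; rewrite inE => /orP [/eqP -> |/sX2]; [apply: X12|].
exists X1 => //; split => [y /sX02 /X21 //|y].
by rewrite inE => /orP [/eqP -> //|/sX2 /X21].
Qed.

Section FractionField.
Variable D : idomainType.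
Local Notation K := (QF D).
Local Notation emb := (@emb D).
Local Notation inD := (@inD D).

Lemma QF_fraction (x : K) : exists a b : D, b != 0 /\ x = emb a / emb b.
Proof.
elim/quotW: x => r; exists (\n_r), (\d_r); split; first exact: denom_ratioP.
change (\pi_(FracField.type D) r = FracField.mul (FracField.tofrac \n_r)
  (FracField.inv (FracField.tofrac \d_r))).
rewrite !piE; apply/eqmodP.
rewrite /= FracField.equivfE /FracField.mulf /FracField.invf.
rewrite !numden_Ratio ?oner_neq0 ?mulf_neq0 ?oner_neq0 ?denom_ratioP //.
by rewrite !mulr1 mul1r mulrC.
Qed.

Lemma embD a b : emb (a + b) = emb a + emb b. Proof. exact: tofracD. Qed.
Lemma embB a b : emb (a - b) = emb a - emb b. Proof. exact: tofracB. Qed.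
Lemma embM a b : emb (a * b) = emb a * emb b. Proof. exact: tofracM. Qed.
Lemma emb1 : emb 1 = 1. Proof. exact: tofrac1. Qed.
Lemma emb0 : emb 0 = 0. Proof. exact: tofrac0. Qed.
Lemma emb_inj : injective emb.
Proof. by move=> a b h; apply/eqP; rewrite -tofrac_eq; apply/eqP. Qed.
Lemma emb_neq0 a : a != 0 -> emb a != 0.
Proof. by rewrite /emb tofrac_eq0. Qed.

Lemma inD_emb d : inD (emb d). Proof. by exists d. Qed.
Lemma inD0 : inD 0. Proof. by exists 0; rewrite emb0. Qed.
Lemma inDB x y : inD x -> inD y -> inD (x - y).
Proof. by move=> [a ->] [b ->]; exists (a - b); rewrite embB. Qed.
Lemma inDD x y : inD x -> inD y -> inD (x + y).
Proof. by move=> [a ->] [b ->]; exists (a + b); rewrite embD. Qed.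
Lemma inDM x y : inD x -> inD y -> inD (x * y).
Proof. by move=> [a ->] [b ->]; exists (a * b); rewrite embM. Qed.

Lemma inD_sum (I : finType) (F : I -> K) : (forall i, inD (F i)) -> inD (\sum_i F i).
Proof. by move=> h; apply: (big_ind inD) => //; [exact: inD0 | exact: inDD]. Qed.

End FractionField.

Section Ideals.
Variable D : idomainType.

Section Ideal.
Variable I : D -> Prop.
Hypothesis idI : is_ideal I.

Lemma ideal0 : I 0. Proof. by case: idI. Qed.
Lemma idealB x y : I x -> I y -> I (x - y). Proof. by case: idI => _ [h _]; apply: h. Qed.
Lemma idealMl a x : I x -> I (a * x). Proof. by case: idI => _ [_ h]; apply: h. Qed.
Lemma idealMr a x : I x -> I (x * a). Proof. by rewrite mulrC; apply: idealMl. Qed.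
Lemma idealN x : I x -> I (- x). Proof. by rewrite -sub0r; apply: idealB; apply: ideal0. Qed.
Lemma idealD x y : I x -> I y -> I (x + y).
Proof. by move=> hx hy; rewrite -[y]opprK; apply: idealB => //; apply: idealN. Qed.

End Ideal.

Section Prime.
Variable P : D -> Prop.
Hypothesis pP : is_prime P.

Lemma prime_ideal : is_ideal P. Proof. by case: pP. Qed.
Lemma prime1 : ~ P 1. Proof. by case: pP => _ []. Qed.
Lemma primeM x y : P (x * y) -> P x \/ P y. Proof. by case: pP => _ [_ h]; apply: h. Qed.
Lemma primeMN x y : ~ P x -> ~ P y -> ~ P (x * y).
Proof. by move=> hx hy /primeM []. Qed.
Lemma notin_prime_neq0 b : ~ P b -> b != 0.
Proof. by move=> h; apply/eqP => e; apply: h; rewrite e; apply: ideal0 prime_ideal. Qed.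
Lemma primeX x n : P (x ^+ n) -> P x.
Proof.
elim: n => [|n IH]; first by rewrite expr0 => /prime1.
by rewrite exprS => /primeM [] // /IH.
Qed.

End Prime.

Lemma zero_prime : is_prime (fun x : D => x = 0).
Proof.
split; first split => //.
  by split => [x y -> ->|a x ->]; rewrite ?subrr ?mulr0.
split; first by move/eqP; rewrite oner_eq0.
by move=> x y /eqP; rewrite mulf_eq0 => /orP [] /eqP; [left|right].
Qed.

Lemma ideal_bigcup_chain (F : set (set D)) X0 : F X0 -> (exists x, X0 x) ->
  total_on F subset -> (forall X, F X -> (exists x, X x) -> is_ideal X) ->
  is_ideal (\bigcup_(X in F) X)%classic.
Proof.
move=> FX0 [x0 X0x0] Ftot hF.
have inF X x : F X -> X x -> is_ideal X by move=> FX Xx; apply: hF FX _; exists x.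
split; first by exists X0 => //; apply: ideal0 (inF _ _ FX0 X0x0).
split; last by move=> a x [X FX Xx]; exists X => //; exact: (idealMl (inF _ _ FX Xx)).
move=> x y hx hy; have [|X FX [_ hX]] := chain_bigcup_seq FX0 Ftot (s := [:: x; y]).
  by move=> g; rewrite !inE => /orP [] /eqP ->.
have Xx : X x by apply: hX; rewrite inE eqxx.
by exists X => //; apply: (idealB (inF _ _ FX Xx)); apply: hX; rewrite !inE eqxx ?orbT.
Qed.

End Ideals.

Section VClosure.
Variable D : idomainType.
Local Notation K := (QF D).
Local Notation emb := (@emb D).
Local Notation inD := (@inD D).

Lemma colon_span (s : seq K) u :
  Defs.colon (Defs.span s) u <-> (forall y, y \in s -> inD (u * y)).
Proof.
split.
- move=> h y ys; have hi : (index y s < size s)%N by rewrite index_mem.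
  apply: h; exists (fun j : 'I_(size s) => if j == Ordinal hi then 1 else 0).
  rewrite (bigD1 (Ordinal hi)) //= eqxx emb1 mul1r big1 ?addr0 ?nth_index //.
  by move=> j /negPf ->; rewrite emb0 mul0r.
- move=> h a [c ->]; rewrite mulr_sumr; apply: inD_sum => i.
  by rewrite mulrCA; apply: inDM; [apply: inD_emb | apply/h/mem_nth].
Qed.

Definition vspan (gs : seq D) (x : K) :=
  forall u, (forall g, g \in gs -> inD (u * emb g)) -> inD (x * u).

Lemma vspanE gs x : vspan gs x <-> vclos (Defs.span (map emb gs)) x.
Proof.
split=> [hv u /colon_span hu | hv u hu]; first by apply: hv => g gs_g; apply/hu/map_f.
by apply/hv/colon_span => _ /mapP [g gs_g ->]; apply: hu.
Qed.

Lemma tclos_embIP (P : D -> Prop) x :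
  tclos (embI P) x <-> exists gs, (forall g, g \in gs -> P g) /\ vspan gs x.
Proof.
split=> [[s [hs hv]] | [gs [hgs /vspanE hv]]]; last first.
  by exists (map emb gs); split => // _ /mapP [g gs_g ->]; exists g; split => //; apply: hgs.
suff [gs [egs hgs]] : exists gs, s = map emb gs /\ forall g, g \in gs -> P g.
  by exists gs; split => //; apply/vspanE; rewrite -egs.
elim: s hs {hv} => [|y s IH] hs; first by exists [::].
have [|gs [-> hgs]] := IH; first by move=> z zs; apply: hs; rewrite inE zs orbT.
have [d [Pd ->]] := hs y (mem_head _ _).
by exists (d :: gs); split => // g; rewrite inE => /orP [/eqP -> | /hgs].
Qed.

Lemma vspan_inD gs x : vspan gs x -> inD x.
Proof. by move=> h; rewrite -[x]mulr1; apply: h => g _; rewrite mul1r; apply: inD_emb. Qed.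

Lemma vspan_mem gs g : g \in gs -> vspan gs (emb g).
Proof. by move=> gs_g u hu; rewrite mulrC; apply: hu. Qed.

Lemma vspan_trans gs hs x :
  (forall g, g \in gs -> vspan hs (emb g)) -> vspan gs x -> vspan hs x.
Proof. by move=> hg hv u hu; apply: hv => g gs_g; rewrite mulrC; apply: hg. Qed.

Lemma vspan_subset gs hs x : {subset gs <= hs} -> vspan gs x -> vspan hs x.
Proof. by move=> sub; apply: vspan_trans => g gs_g; apply/vspan_mem/sub. Qed.

Lemma vspanB gs x y : vspan gs x -> vspan gs y -> vspan gs (x - y).
Proof. by move=> hx hy u hu; rewrite mulrBl; apply: inDB; [apply: hx|apply: hy]. Qed.

Lemma vspanMl gs a x : vspan gs x -> vspan gs (emb a * x).
Proof. by move=> hx u hu; rewrite -mulrA; apply: inDM; [apply: inD_emb|apply: hx]. Qed.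

Lemma vspan0 gs : vspan gs 0.
Proof. by move=> u _; rewrite mul0r; apply: inD0. Qed.

Definition t_closed (P : D -> Prop) :=
  forall gs, (forall g, g \in gs -> P g) -> forall d, vspan gs (emb d) -> P d.

Definition zero_ideal (P : D -> Prop) := forall x, P x -> x = 0.

Lemma t_idealE P : is_t_ideal P <-> is_ideal P /\ (zero_ideal P \/ t_closed P).
Proof.
rewrite /is_t_ideal; split => -[idP h]; split => //; case: h => h; [by left| |by left|].
- right => gs hgs d hv.
  have /h [d' [Pd' /emb_inj ->]] : tclos (embI P) (emb d) by apply/tclos_embIP; exists gs.
  exact: Pd'.
- right => x; split.
  + move=> /tclos_embIP [gs [hgs hv]]; have [d e] := vspan_inD hv.
    by exists d; split => //; apply: (h gs) => //; rewrite -e.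
  + move=> [d [Pd ->]]; apply/tclos_embIP; exists [:: d].
    by split; [move=> g; rewrite inE => /eqP -> | apply: vspan_mem; rewrite inE].
Qed.

Definition t_span (A : D -> Prop) (d : D) :=
  exists gs, (forall g, g \in gs -> A g) /\ vspan gs (emb d).

Lemma t_span_sub (A : D -> Prop) d : A d -> t_span A d.
Proof.
move=> Ad; exists [:: d]; split; last by apply: vspan_mem; rewrite inE.
by move=> g; rewrite inE => /eqP ->.
Qed.

Lemma t_span_ideal A : is_ideal (t_span A).
Proof.
split; first by exists [::]; split => //; rewrite emb0; apply: vspan0.
split; last by move=> a b [gs [hgs hv]]; exists gs; split => //; rewrite embM; apply: vspanMl.
move=> a b [g1 [h1 v1]] [g2 [h2 v2]]; exists (g1 ++ g2); split.
  by move=> g; rewrite mem_cat => /orP [/h1|/h2].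
by rewrite embB; apply: vspanB; apply: vspan_subset; try eassumption;
  move=> g g_in; rewrite mem_cat g_in ?orbT.
Qed.

Lemma t_span_t_closed A : t_closed (t_span A).
Proof.
move=> hs hhs d hv.
suff [G [hG vG]] : exists G, (forall g, g \in G -> A g) /\
    forall h, h \in hs -> vspan G (emb h) by exists G; split => //; apply: vspan_trans vG hv.
elim: hs hhs {hv} => [|h hs IH] hhs; first by exists [::].
have [|G [hG vG]] := IH; first by move=> y y_in; apply: hhs; rewrite inE y_in orbT.
have [g1 [h1 v1]] := hhs h (mem_head _ _).
exists (g1 ++ G); split; first by move=> g; rewrite mem_cat => /orP [/h1|/hG].
move=> y; rewrite inE => /orP [/eqP ->|/vG v]; apply: vspan_subset; try eassumption;
  by move=> g g_in; rewrite mem_cat g_in ?orbT.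
Qed.

Lemma t_closed_bigcup_chain (F : set (set D)) X0 : F X0 -> (exists x, X0 x) ->
  total_on F subset -> (forall X, F X -> (exists x, X x) -> t_closed X) ->
  t_closed (\bigcup_(X in F) X)%classic.
Proof.
move=> FX0 [x0 X0x0] Ftot hF gs hgs d hv.
have [X FX [sX0X hX]] := chain_bigcup_seq FX0 Ftot hgs.
have X_nz : exists x, X x by exists x0; apply: sX0X.
by exists X => //; apply: (hF X FX X_nz gs).
Qed.

End VClosure.

Section Localization.
Variable D : idomainType.
Local Notation K := (QF D).
Local Notation emb := (@emb D).
Local Notation inD := (@inD D).
Local Notation loc := (@loc D).

Lemma loc_zero_ideal (P : D -> Prop) x : zero_ideal P -> loc P x.
Proof.
move=> hz; have [a [b [hb ->]]] := QF_fraction x; exists a, b; split => //.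
by move=> /hz e; rewrite e eqxx in hb.
Qed.

Lemma loc_subset (P Q : D -> Prop) x : (forall y, Q y -> P y) -> loc P x -> loc Q x.
Proof. by move=> sub [a [b [hb ->]]]; exists a, b; split => // /sub. Qed.

Lemma valuation_loc_subset (P Q : D -> Prop) : (forall y, Q y -> P y) ->
  is_valuation (loc P) -> is_valuation (loc Q).
Proof. by move=> sub hv x /hv [] h; [left|right]; apply: loc_subset h. Qed.

Variable P : D -> Prop.
Hypothesis pP : is_prime P.

Lemma loc_div a s : ~ P s -> loc P (emb a / emb s).
Proof. by move=> h; exists a, s. Qed.

Lemma loc_emb d : loc P (emb d).
Proof. by rewrite -[emb d]divr1 -emb1; apply/loc_div/prime1. Qed.

Lemma loc_inD x : inD x -> loc P x.
Proof. by move=> [d ->]; apply: loc_emb. Qed.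

Lemma locM x y : loc P x -> loc P y -> loc P (x * y).
Proof.
move=> [a1 [b1 [h1 ->]]] [a2 [b2 [h2 ->]]]; exists (a1 * a2), (b1 * b2).
by split; [apply: primeMN | rewrite !embM invfM mulrACA].
Qed.

Lemma locB x y : loc P x -> loc P y -> loc P (x - y).
Proof.
move=> [a1 [b1 [h1 ->]]] [a2 [b2 [h2 ->]]]; exists (a1 * b2 - a2 * b1), (b1 * b2).
split; first exact: primeMN.
have n1 := emb_neq0 (notin_prime_neq0 pP h1); have n2 := emb_neq0 (notin_prime_neq0 pP h2).
by rewrite -mulNr addf_div // mulNr embB !embM.
Qed.

Lemma loc_overring : is_overring (loc P).
Proof.
split; last exact: loc_emb.
by split; [rewrite -emb1; apply: loc_emb | split => x y; [apply: locB | apply: locM]].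
Qed.

Lemma loc_common_denominator (xs : seq K) : (forall x, x \in xs -> loc P x) ->
  exists s, ~ P s /\ forall x, x \in xs -> inD (emb s * x).
Proof.
elim: xs => [|x xs IH] h; first by exists 1; split => //; apply: prime1.
have [|s [hs hx]] := IH; first by move=> y y_in; apply: h; rewrite inE y_in orbT.
have [a [b [hb ex]]] := h x (mem_head _ _).
exists (b * s); split; first exact: primeMN.
move=> y; rewrite inE => /orP [/eqP -> | y_in].
  have nb := emb_neq0 (notin_prime_neq0 pP hb).
  suff -> : emb (b * s) * x = emb (s * a) by apply: inD_emb.
  by rewrite ex !embM mulrC mulrA divfK // mulrC.
by rewrite embM -mulrA; apply: inDM; [apply: inD_emb | apply: hx].
Qed.

Definition loc_max (z : K) := exists a s, P a /\ ~ P s /\ z = emb a / emb s.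

Lemma loc_max0 : loc_max 0.
Proof.
exists 0, 1; rewrite emb0 mul0r; split; first exact: ideal0 (prime_ideal pP).
by split; first exact: prime1.
Qed.

Lemma loc_maxMloc x y : loc_max x -> loc P y -> loc_max (x * y).
Proof.
move=> [a1 [s1 [h1 [n1 ->]]]] [a2 [s2 [n2 ->]]]; exists (a1 * a2), (s1 * s2).
split; first exact: idealMr (prime_ideal pP) _ _ h1.
by split; [apply: primeMN | rewrite !embM invfM mulrACA].
Qed.

Lemma loc_maxB x y : loc_max x -> loc_max y -> loc_max (x - y).
Proof.
move=> [a1 [s1 [h1 [n1 ->]]]] [a2 [s2 [h2 [n2 ->]]]]; exists (a1 * s2 - a2 * s1), (s1 * s2).
have idP := prime_ideal pP.
split; first by apply: idealB => //; apply: idealMr.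
split; first exact: primeMN.
have e1 := emb_neq0 (notin_prime_neq0 pP n1); have e2 := emb_neq0 (notin_prime_neq0 pP n2).
by rewrite -mulNr addf_div // mulNr embB !embM.
Qed.

Lemma loc_maxMl r x : loc_max x -> loc_max (emb r * x).
Proof.
move=> [a [s [h [n ->]]]]; exists (r * a), s.
by split; [exact: idealMl (prime_ideal pP) _ _ h | split => //; rewrite embM mulrA].
Qed.

Lemma loc_max1N : ~ loc_max 1.
Proof.
move=> [a [s [h [n e]]]]; have ns := emb_neq0 (notin_prime_neq0 pP n).
have eas : a = s by apply: emb_inj; rewrite -[emb a](divfK ns) -e mul1r.
by apply: n; rewrite -eas.
Qed.

Hypothesis val : is_valuation (loc P).

Lemma valuation_loc_max_inv z : z != 0 -> ~ loc_max z -> loc P z^-1.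
Proof.
move=> nz nM; case: (val nz) => // -[a [s [ns ez]]].
have [Pa|nPa] := pselect (P a); first by exfalso; apply: nM; exists a, s.
by rewrite ez invf_div; apply: loc_div.
Qed.

Lemma valuation_inv_loc_max z : z != 0 -> ~ loc P z -> loc_max z^-1.
Proof.
move=> nz nl; case: (val nz) => // -[a [s [ns ez]]].
have [Pa|nPa] := pselect (P a); first by exists a, s.
by exfalso; apply: nl; rewrite -[z]invrK ez invf_div; apply: loc_div.
Qed.

Lemma valuation_generator (gs : seq D) : (exists g, g \in gs /\ g != 0) ->
  exists g0, [/\ g0 \in gs, g0 != 0 & forall g, g \in gs -> loc P (emb g / emb g0)].
Proof.
elim: gs => [|h t IH] hex; first by case: hex => g [].
have loc0 : loc P 0 by rewrite -emb0; apply: loc_emb.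
have loc1 : loc P 1 by rewrite -emb1; apply: loc_emb.
have [[g1 [g1_in g1nz hg1]]|tz] := pselect (exists g0, [/\ g0 \in t, g0 != 0 &
    forall g, g \in t -> loc P (emb g / emb g0)]).
  have n1 := emb_neq0 g1nz.
  have keep_g1 : loc P (emb h / emb g1) -> exists g0, [/\ g0 \in h :: t, g0 != 0 &
      forall g, g \in h :: t -> loc P (emb g / emb g0)].
    by exists g1; split; rewrite ?inE ?g1_in ?orbT // => g /orP [/eqP ->|/hg1].
  have [h0|hnz] := eqVneq h 0; first by apply: keep_g1; rewrite h0 emb0 mul0r.
  have nh := emb_neq0 hnz.
  have [|hv] := val (mulf_neq0 nh (invr_neq0 n1)); first exact: keep_g1.
  exists h; split; rewrite ?inE ?eqxx // => g /orP [/eqP ->|/hg1 hg]; first by rewrite divff.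
  have -> : emb g / emb h = (emb g / emb g1) * (emb g1 / emb h) by rewrite mulrA divfK.
  by apply: locM => //; rewrite -invf_div.
have tz0 : forall g, g \in t -> g = 0.
  move=> g g_in; apply: contrapT => /eqP gnz; apply: tz; apply: IH; by exists g.
have hnz : h != 0.
  by case: hex => g []; rewrite inE => /orP [/eqP -> //|/tz0 ->]; rewrite eqxx.
exists h; split; rewrite ?inE ?eqxx // => g /orP [/eqP ->|/tz0 ->].
  by rewrite divff // emb_neq0.
by rewrite emb0 mul0r.
Qed.

End Localization.

Section TMaximal.
Variable D : idomainType.
Local Notation K := (QF D).
Local Notation emb := (@emb D).
Local Notation inD := (@inD D).
Local Notation loc := (@loc D).

Lemma t_maximal_above (I : D -> Prop) : is_ideal I -> t_closed I -> ~ I 1 ->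
  exists m, is_t_maximal m /\ forall x, I x -> m x.
Proof.
move=> idI tI nI1.
pose good (A : D -> Prop) := [/\ is_ideal A, t_closed A, ~ A 1 & forall x, I x -> A x].
have [A [gA Amax]] : exists A, (good A \/ A = set0) /\
    forall B, (A `<` B)%classic -> ~ (good B \/ B = set0).
  apply: Zorn_bigcup => F Fgood Ftot.
  have [[X0 FX0 [x0 X0x0]]|Fempty] := pselect (exists2 X, F X & exists x, X x); last first.
    right; apply/seteqP; split => // x [X FX Xx]; apply: Fempty; by exists X; last exists x.
  have goodF X : F X -> (exists x, X x) -> good X.
    by move=> FX [x Xx]; case: (Fgood X FX) => // eX; rewrite eX in Xx.
  have X0nz : exists x, X0 x by exists x0.
  left; split.
  - by apply: (ideal_bigcup_chain FX0) => // X FX /(goodF X FX) [].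
  - by apply: (t_closed_bigcup_chain FX0) => // X FX /(goodF X FX) [].
  - by move=> [X FX X1]; have [] := goodF X FX (ex_intro _ 1 X1).
  - by move=> x Ix; exists X0 => //; have [_ _ _] := goodF X0 FX0 X0nz; apply.
have {gA} [idA tA nA1 IA] : good A.
  case: gA => // eA; exfalso; apply: (Amax I); last by left.
  by rewrite eA; split => // sub; apply: (sub 0); apply: ideal0.
exists A; split => //; split; first by apply/t_idealE; split => //; right.
split => // J tJ nJ1 AJ x Jx; apply: contrapT => nAx.
have [idJ [zJ|tcJ]] := proj1 (t_idealE J) tJ.
  by apply: nAx; rewrite (zJ x Jx); apply: ideal0.
apply: (Amax J); last by left; split => // y /IA /AJ.
by split => // sub; apply/nAx/sub.
Qed.

Lemma t_maximal_prime (m : D -> Prop) : is_t_maximal m -> is_prime m.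
Proof.
move=> [tm [nm1 mmax]]; have [idm [zm|tcm]] := proj1 (t_idealE m) tm.
  split=> //; split=> // x y /zm /eqP.
  by rewrite mulf_eq0 => /orP [] /eqP ->; [left|right]; apply: ideal0.
split=> //; split=> // x y mxy.
have [mx|nmx] := pselect (m x); [by left | right].
pose T := t_span (fun z => exists h r, m h /\ z = h + r * x).
have [gs [hgs v1]] : T 1.
  apply: contrapT => nT1; apply/nmx/(mmax T) => //.
  - by apply/t_idealE; split; [apply: t_span_ideal | right; apply: t_span_t_closed].
  - by move=> h mh; apply: t_span_sub; exists h, 0; rewrite mul0r addr0.
  - by apply: t_span_sub; exists 0, 1; rewrite mul1r add0r; split => //; apply: ideal0.
apply: (tcm (map (fun g => y * g) gs)).
  move=> _ /mapP [g g_in ->]; have [h [r [mh ->]]] := hgs g g_in.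
  rewrite mulrDr; apply: idealD => //; first exact: idealMl.
  by rewrite mulrCA (mulrC y); apply: idealMl.
move=> u hu; rewrite -[_ * u]mul1r -emb1; apply: v1 => g g_in.
by rewrite -mulrA mulrCA -embM; apply: hu; apply/mapP; exists g.
Qed.

(* When D is a field the v-closure of the zero ideal is D, which no prime contains. *)
Lemma valuation_prime_t_closed (P : D -> Prop) : is_prime P -> is_valuation (loc P) ->
  (exists z : K, ~ inD z) -> t_closed P.
Proof.
move=> pP val [z nz] gs hgs b hv; apply: contrapT => nPb.
have [hex|hz] := pselect (exists g, g \in gs /\ g != 0); last first.
  have nb := emb_neq0 (notin_prime_neq0 pP nPb).
  apply: nz; rewrite -[z](divfK nb) mulrC; apply: hv => g g_in.
  suff -> : g = 0 by rewrite emb0 mulr0; apply: inD0.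
  by apply: contrapT => /eqP gnz; apply: hz; exists g.
have [g0 [g0_in g0nz hg0]] := valuation_generator pP val hex.
have n0 := emb_neq0 g0nz.
have [|s [hs hsx]] := loc_common_denominator pP (xs := map (fun g => emb g / emb g0) gs).
  by move=> _ /mapP [g g_in ->]; apply: hg0.
have [d ed] : inD (emb b * (emb s / emb g0)).
  apply: hv => g g_in; rewrite mulrAC -mulrA.
  by apply: hsx; apply/mapP; exists g.
have /emb_inj ebs : emb (b * s) = emb (d * g0) by rewrite !embM -ed mulrA divfK.
have : P (b * s) by rewrite ebs; apply: idealMl (prime_ideal pP) _ _ _; apply: hgs.
by move=> /(primeM pP) [].
Qed.

End TMaximal.

Section ConstructibleTopology.
Variable D : idomainType.
Local Notation SP := (Spec D).

Definition basic_open (gs : seq D) (f : D) (Q : SP) :=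
  (forall g, g \in gs -> sval Q g) /\ ~ sval Q f.

Lemma basic_open_constructible gs f : constructible_open (basic_open gs f).
Proof.
elim: gs => [|g gs IH].
  apply: (@go_ext _ _ (Dopen f)); last by apply: go_sub; exists f; left.
  by move=> P; split => [h|[]//]; split.
apply: (@go_ext _ _ (fun P => ~ Dopen g P /\ basic_open gs f P)); last first.
  by apply: go_inter => //; apply: go_sub; exists g; right.
move=> P; split=> [[/contrapT Pg [hgs nPf]] | [hgs nPf]].
  by split => // y; rewrite inE => /orP [/eqP ->|/hgs].
split; first by apply; apply: hgs; rewrite inE eqxx.
by split => // y y_in; apply: hgs; rewrite inE y_in orbT.
Qed.

Lemma constructible_open_basic_nbhd (U : SP -> Prop) :
  (forall P, U P -> exists gs f, basic_open gs f P /\ forall Q, basic_open gs f Q -> U Q) <->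
  constructible_open U.
Proof.
split=> [hU | ].
  apply: (@go_ext _ _ (fun P => exists W, (exists gs f,
    W = basic_open gs f /\ forall Q, basic_open gs f Q -> U Q) /\ W P)); last first.
    by apply: go_union => W [gs [f [-> _]]]; apply: basic_open_constructible.
  move=> P; split=> [[W [[gs [f [-> hW]]] WP]] | /hU [gs [f [hP hQ]]]]; first exact: hW.
  by exists (basic_open gs f); split => //; exists gs, f.
elim => {U}.
- move=> U [f [hf|hf]] P UP.
    by exists [::], f; split=> [|Q [_ /hf //]]; split => //; apply/hf.
  have one1 : ~ sval P 1 := prime1 (svalP P).
  exists [:: f], 1; split=> [|Q [hQ _]].
    by split=> // g; rewrite inE => /eqP ->; apply: contrapT; move/hf: UP.
  by apply/hf => /(_ (hQ f (mem_head _ _))).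
- by move=> P _; exists [::], 1; split => //; split => //; apply: prime1 (svalP P).
- move=> U V _ hU _ hV P [/hU [g1 [f1 [[b1 n1] q1]]] /hV [g2 [f2 [[b2 n2] q2]]]].
  exists (g1 ++ g2), (f1 * f2); split.
    split; first by move=> g; rewrite mem_cat => /orP [/b1|/b2].
    exact: (primeMN (svalP P) n1 n2).
  move=> Q [hQ nQ]; have idQ := prime_ideal (svalP Q); split.
    apply: q1; split; first by move=> g g_in; apply: hQ; rewrite mem_cat g_in.
    by move=> Qf1; apply: nQ; apply: (idealMr idQ).
  apply: q2; split; first by move=> g g_in; apply: hQ; rewrite mem_cat g_in orbT.
  by move=> Qf2; apply: nQ; apply: (idealMl idQ).
- move=> F _ hF P [W [FW WP]]; have [gs [f [b q]]] := hF W FW P WP.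
  by exists gs, f; split => // Q /q WQ; exists W.
- move=> U V hUV _ hU P /hUV /hU [gs [f [b q]]].
  by exists gs, f; split => // Q /q /hUV.
Qed.

End ConstructibleTopology.

Section PvMDForward.
Variable D : idomainType.
Local Notation K := (QF D).
Local Notation emb := (@emb D).
Local Notation inD := (@inD D).
Local Notation loc := (@loc D).
Hypothesis pvmd : PvMD D.

Lemma pvmd_essential : essential D.
Proof.
exists (fun V => exists m, is_t_maximal m /\ forall x, V x <-> loc m x); split.
  move=> V [m [tm hV]]; have -> : V = loc m by apply/funext => x; apply/propext.
  have pm := t_maximal_prime tm.
  by split; [apply: loc_overring | split; [apply: pvmd | exists m]].
move=> x; split=> [xD V [m [tm ->]] | hall]; first exact: loc_inD (t_maximal_prime tm) _ xD.
pose I d := inD (emb d * x).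
have idI : is_ideal I.
  split; first by rewrite /I emb0 mul0r; apply: inD0.
  split; first by move=> a b ha hb; rewrite /I embB mulrBl; apply: inDB.
  by move=> a b hb; rewrite /I embM -mulrA; apply: inDM => //; apply: inD_emb.
have tI : t_closed I by move=> gs hgs d hv; apply: hv => g g_in; rewrite mulrC; apply: hgs.
have [I1|nI1] := pselect (I 1); first by move: I1; rewrite /I emb1 mul1r.
have [m [tm Im]] := t_maximal_above idI tI nI1.
have [a [b [mb ex]]] : loc m x by apply: hall; exists m.
have nb := emb_neq0 (notin_prime_neq0 (t_maximal_prime tm) mb).
by exfalso; apply/mb/Im; rewrite /I ex mulrC divfK //; apply: inD_emb.
Qed.

Lemma pvmd_EE_closed : constructible_closed (@EE D).
Proof.
apply/constructible_open_basic_nbhd => -[P pP] /= nE.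
have [z nz] : exists z : K, ~ inD z.
  apply: contrapT => hK; apply: nE => z _; left; apply: loc_inD => //.
  by apply: contrapT => hz; apply: hK; exists z.
have nTC : ~ t_closed P.
  move=> tP; have [m [tm Pm]] := t_maximal_above (prime_ideal pP) tP (prime1 pP).
  exact/nE/(valuation_loc_subset Pm)/pvmd.
have [gs [hgs [d [hv nPd]]]] : exists gs, (forall g, g \in gs -> P g) /\
    exists d, vspan gs (emb d) /\ ~ P d.
  apply: contrapT => h; apply: nTC => gs hgs d hv; apply: contrapT => nd.
  by apply: h; exists gs; split => //; exists d.
exists gs, d; split; first by split.
move=> [Q pQ] [/= hQ nQd] /= EQ; apply: nQd.
by apply: valuation_prime_t_closed hQ _ hv; last exists z.
Qed.

End PvMDForward.

Section PowerContraction.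
Variable D : idomainType.
Local Notation emb := (@emb D).
Local Notation loc := (@loc D).
Variables (P : D -> Prop) (f : D).
Hypotheses (pP : is_prime P) (val : is_valuation (loc P)) (fnz : f != 0).

Definition power_contraction (d : D) := forall n, loc_max P (emb d / emb (f ^+ n)).

Let embX_neq0 n : emb (f ^+ n) != 0. Proof. exact/emb_neq0/expf_neq0. Qed.

Lemma power_contraction_prime : is_prime power_contraction.
Proof.
split; first split.
- by move=> n; rewrite emb0 mul0r; apply: loc_max0.
- split=> [x y hx hy n | a x hx n]; first by rewrite embB mulrBl; apply: loc_maxB.
  by rewrite embM -mulrA; apply: loc_maxMl.
split; first by move=> /(_ 0%N); rewrite expr0 emb1 divr1; apply: loc_max1N.
move=> x y hxy; apply: contrapT => /not_orP [/existsNP [n1 h1] /existsNP [n2 h2]].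
have xnz : emb x != 0 by apply: contra_notN h1 => /eqP ->; rewrite mul0r; apply: loc_max0.
have ynz : emb y != 0 by apply: contra_notN h2 => /eqP ->; rewrite mul0r; apply: loc_max0.
have := valuation_loc_max_inv val (mulf_neq0 xnz (invr_neq0 (embX_neq0 n1))) h1.
have := valuation_loc_max_inv val (mulf_neq0 ynz (invr_neq0 (embX_neq0 n2))) h2.
rewrite !invf_div => l2 l1; apply: (loc_max1N pP).
have -> : 1 = emb (x * y) / emb (f ^+ (n1 + n2)) * (emb (f ^+ n1) / emb x) *
    (emb (f ^+ n2) / emb y).
  by rewrite exprD !embM divf_cross_cancel ?embX_neq0.
by apply: loc_maxMloc => //; apply: loc_maxMloc.
Qed.

Lemma power_contraction_sub d : power_contraction d -> P d.
Proof.
move=> /(_ 0%N) [a [s [Pa [nPs e]]]]; rewrite expr0 emb1 divr1 in e.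
have ns := emb_neq0 (notin_prime_neq0 pP nPs).
have /emb_inj eds : emb (d * s) = emb a by rewrite embM e divfK.
by have /(primeM pP) [] : P (d * s) by rewrite eds.
Qed.

Lemma power_contraction_notin : ~ power_contraction f.
Proof. by move=> /(_ 1%N); rewrite expr1 divff ?emb_neq0 //; apply: loc_max1N. Qed.

End PowerContraction.

Section UltraLimit.
Variables (D : idomainType) (I : Type) (G : set_system I).
Hypothesis ultraG : UltraFilter G.
Variable Pn : I -> Spec D.

Definition ultra_limit (d : D) := G (fun i => sval (Pn i) d).

Let G_all (A : set I) : (forall i, A i) -> G A.
Proof. by move=> hA; apply: filterS filterT => i _; apply: hA. Qed.

Lemma ultra_limit_prime : is_prime ultra_limit.
Proof.
have idPn i := prime_ideal (svalP (Pn i)).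
split; first split.
- by apply: G_all => i; apply: ideal0.
- split=> [x y hx hy | a x hx]; last by apply: filterS hx => i; apply: idealMl.
  by apply: filterS (filterI hx hy) => i [Px Py]; apply: idealB.
split.
  move=> G1; apply: (filter_not_empty G); apply: filterS G1 => i.
  exact: prime1 (svalP (Pn i)).
move=> x y hxy; have [Gx|GNx] := in_ultra_setVsetC (fun i => sval (Pn i) x) ultraG.
  by left.
by right; apply: filterS (filterI hxy GNx) => i [/(primeM (svalP (Pn i))) [] ].
Qed.

Lemma ultra_limit_notin k : ~ ultra_limit k -> G (fun i => ~ sval (Pn i) k).
Proof. by move=> nk; case: (in_ultra_setVsetC (fun i => sval (Pn i) k) ultraG). Qed.

Lemma ultra_limit_seq (l : seq D) : (forall h, h \in l -> ultra_limit h) ->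
  G (fun i => forall h, h \in l -> sval (Pn i) h).
Proof.
elim: l => [|h l IH] hl; first by apply: G_all.
have Gl : G (fun i => forall y, y \in l -> sval (Pn i) y).
  by apply: IH => y y_in; apply: hl; rewrite inE y_in orbT.
apply: filterS (filterI (hl h (mem_head _ _)) Gl) => i [Ph Pl] y.
by rewrite inE => /orP [/eqP -> //|]; apply: Pl.
Qed.

Lemma ultra_limit_EE : constructible_closed (@EE D) -> (forall i, EE (Pn i)) ->
  is_valuation (loc ultra_limit).
Proof.
move=> closedE EPn; apply: contrapT => nE.
have [hs [k [[bh bk] hq]]] :=
  proj2 (constructible_open_basic_nbhd _) closedE (exist _ _ ultra_limit_prime) nE.
have [i [Phs nPk]] := filter_ex (filterI (ultra_limit_seq bh) (ultra_limit_notin bk)).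
exact: hq (Pn i) (conj Phs nPk) (EPn i).
Qed.

End UltraLimit.

Section PvMDBackward.
Variable D : idomainType.
Local Notation emb := (@emb D).
Local Notation loc := (@loc D).
Local Notation SP := (Spec D).

Variables (gs : seq D) (f : D).
Hypothesis fnz : f != 0.
Hypothesis gs_nz : exists g, g \in gs /\ g != 0.
Hypothesis nbhd_EE : forall Q : SP, basic_open gs f Q -> ~ EE Q.

Lemma essential_vspan_power N : essential D ->
  (forall P, is_prime P -> is_valuation (loc P) -> (forall g, g \in gs -> P g) ->
    exists g, [/\ g \in gs, g != 0 & loc P (emb (f ^+ N) / emb g)]) ->
  vspan gs (emb (f ^+ N)).
Proof.
move=> [Fam [hF hD]] hN u hu; apply/hD => V FV; have [_ [vV [p [pp hp]]]] := hF V FV.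
have eV : V = loc p by apply/funext => x; apply/propext.
rewrite eV in vV *.
have [pgs|/existsNP [g /not_implyP [g_in npg]]] := pselect (forall g, g \in gs -> p g).
  have [g [g_in gnz hl]] := hN p pp vV pgs.
  have ng := emb_neq0 gnz.
  have -> : emb (f ^+ N) * u = emb (f ^+ N) / emb g * (u * emb g).
    by rewrite [RHS]mulrA [RHS]mulrAC divfK.
  by apply: (locM pp) => //; apply: (loc_inD pp); apply: hu.
have [d ed] := hu g g_in.
have ng := emb_neq0 (notin_prime_neq0 pp npg).
have -> : u = emb d / emb g by rewrite -ed mulfK.
by apply: (locM pp); [apply: (loc_emb pp) | apply: loc_div].
Qed.

Lemma valuation_power_divisible (P : D -> Prop) : is_prime P -> is_valuation (loc P) ->
  (forall g, g \in gs -> P g) ->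
  exists n g, [/\ g \in gs, g != 0 & loc P (emb (f ^+ n) / emb g)].
Proof.
move=> pP val Pgs.
have [g0 [g0_in g0nz hg0]] := valuation_generator pP val gs_nz.
apply: contrapT => hno.
have g0Q : power_contraction P f g0.
  move=> n; rewrite -invf_div; apply: valuation_inv_loc_max => //.
    by rewrite mulf_neq0 ?invr_neq0 ?emb_neq0 ?expf_neq0.
  by move=> hl; apply: hno; exists n, g0.
pose Q := exist _ _ (power_contraction_prime pP val fnz) : SP.
apply: (nbhd_EE (Q := Q)).
  split=> [g g_in n | ]; last exact: power_contraction_notin.
  have -> : emb g / emb (f ^+ n) = emb g0 / emb (f ^+ n) * (emb g / emb g0).
    by rewrite [RHS]mulrC mulrA divfK // emb_neq0.
  by apply: (loc_maxMloc pP); [apply: g0Q | apply: hg0].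
exact: valuation_loc_subset (@power_contraction_sub _ _ _ pP) val.
Qed.

Lemma uniform_power_divisible : constructible_closed (@EE D) ->
  exists N, forall P, is_prime P -> is_valuation (loc P) -> (forall g, g \in gs -> P g) ->
  exists g, [/\ g \in gs, g != 0 & loc P (emb (f ^+ N) / emb g)].
Proof.
move=> closedE; apply: contrapT => /forallNP hno.
have hP N : exists Q : SP, [/\ EE Q, forall g, g \in gs -> sval Q g &
    ~ exists g, [/\ g \in gs, g != 0 & loc (sval Q) (emb (f ^+ N) / emb g)]].
  apply: contrapT => hN; apply: (hno N) => P pP vP Pgs.
  by apply: contrapT => nP; apply: hN; exists (exist _ P pP).
have [Pn hPn] := choice hP.
have [G [ultraG eventG]] := @ultraFilterLemma nat eventually _.
pose L := ultra_limit G Pn.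
have pL : is_prime L := ultra_limit_prime ultraG Pn.
have vL : is_valuation (loc L) by apply: ultra_limit_EE => // N; case: (hPn N).
have Lgs g : g \in gs -> L g.
  by move=> g_in; apply: filterS filterT => N _; case: (hPn N) => _ /(_ g g_in).
have [n [g [g_in gnz [a [s [nLs e]]]]]] := valuation_power_divisible pL vL Lgs.
have Gn : G (fun N => (n <= N)%N) by apply: eventG; exists n.
have [N [nPNs leN]] := filter_ex (filterI (ultra_limit_notin ultraG nLs) Gn).
have [_ _ []] := hPn N; exists g; split => //.
have -> : f ^+ N = f ^+ (N - n) * f ^+ n by rewrite -exprD subnK.
rewrite embM -mulrA e.
by apply: (locM (svalP (Pn N))); [apply: (loc_emb (svalP (Pn N))) | apply: loc_div].
Qed.

End PvMDBackward.

Lemma essential_EE_closed_pvmd (D : idomainType) :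
  essential D -> constructible_closed (@EE D) -> PvMD D.
Proof.
move=> ess closedE m tm; have pm := t_maximal_prime tm.
have [_ [zm|tcm]] := proj1 (t_idealE m) (proj1 tm).
  by move=> x _; left; apply: loc_zero_ideal.
apply: contrapT => nv.
have [gs [f [[mgs nmf] nbhd]]] :=
  proj2 (constructible_open_basic_nbhd _) closedE (exist _ m pm) nv.
have fnz := notin_prime_neq0 pm nmf.
have nbhd_EE Q : basic_open gs f Q -> ~ EE Q by move=> /nbhd.
have gs_nz : exists g, g \in gs /\ g != 0.
  apply: contrapT => /forallNP gs0; apply: (nbhd_EE (exist _ _ (zero_prime D))).
    split=> /= [g g_in|]; last exact/eqP.
    by apply: contrapT => /eqP gnz; apply: (gs0 g).
  by move=> x _; left; apply: loc_zero_ideal.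
have [N hN] := uniform_power_divisible fnz gs_nz nbhd_EE closedE.
by apply: nmf; apply: (primeX pm (n := N)); apply: (tcm gs) => //; apply: essential_vspan_power.
Qed.

Theorem corollary2p6 (D : idomainType) :
  PvMD D <-> (essential D /\ constructible_closed (@EE D)).
Proof.
split=> [pvmd | [ess closedE]]; last exact: essential_EE_closed_pvmd.
by split; [apply: pvmd_essential | apply: pvmd_EE_closed].
Qed.
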